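(* Let $n\ge 1$, $t_1<\dots<t_{n+1}$, let $\varphi_0,\dots,\varphi_{n+2}$ be the natural basis and $\mathbf{C}=[c_{k,l}]_{k,l=1}^{n+3}$ with $c_{k,l}=\int_{t_1}^{t_{n+1}}\varphi_{k-1}''(t)\varphi_{l-1}''(t)\,dt$. Then: (i) $\mathbf{C}$ is symmetric and non-negative definite; (ii) for $u_1,u_{n+1}\in\mathbb{R}$ and $\boldsymbol{p}\in\mathbb{R}^{n+1}$, $(u_1,\boldsymbol{p}^T,u_{n+1})\mathbf{C}(u_1,\boldsymbol{p}^T,u_{n+1})^T=0$ if and only if $u_1=u_{n+1}=0$ and $\boldsymbol{p}$ belongs to the range $R(\mathbf{L})$ of the $(n+1)\times 2$ matrix $\mathbf{L}$ whose $i$-th row is $(1,t_i)$; (iii) $c_{1,j+1}=c_{n+3,j+1}=0$ for all $j=1,\dots,n+1$ (so, by symmetry, $\mathbf{C}$ has the block form with $c_{1,1},c_{1,n+3},c_{n+3,1},c_{n+3,n+3}$ in the corners, the middle block $\mathbf{C}(2,n+2)=[c_{ij}:i,j=2,\dots,n+2]$, and zeros elsewhere); (iv) the $2\times2$ matrix $\begin{pmatrix}c_{1,1}&c_{1,n+3}\\ c_{n+3,1}&c_{n+3,n+3}\end{pmatrix}$ is symmetric positive definite; (v) the null space of $\mathbf{C}(2,n+2)$ equals $R(\mathbf{L})$; (vi) for $s=u_1\varphi_0+\sum_{j=1}^{n+1}p_j\varphi_j+u_{n+1}\varphi_{n+2}$, $$\int_{t_1}^{t_{n+1}}|s''(t)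|^2dt=u_1^2c_{1,1}+u_{n+1}^2c_{n+3,n+3}+2c_{1,n+3}u_1u_{n+1}+\boldsymbol{p}^T\mathbf{C}(2,n+2)\boldsymbol{p}.$$
   Context: $S_3\cap C^2$ is the set of $C^2$ functions on $[t_1,t_{n+1}]$ that are cubic polynomials on each $[t_i,t_{i+1}]$. The natural basis is defined as follows: $\varphi_0$ is the unique element of $S_3\cap C^2$ with $\varphi_0(t_i)=0$ for all $i$, $\varphi_0''(t_1)=1$, $\varphi_0''(t_{n+1})=0$; for $j=1,\dots,n+1$, $\varphi_j$ is the unique element of $S_3\cap C^2$ with $\varphi_j(t_i)=\delta_{ij}$ for all $i$ and $\varphi_j''(t_1)=\varphi_j''(t_{n+1})=0$; $\varphi_{n+2}$ is the unique element of $S_3\cap C^2$ with $\varphi_{n+2}(t_i)=0$ for all $i$, $\varphi_{n+2}''(t_1)=0$, $\varphi_{n+2}''(t_{n+1})=1$. Every $s\in S_3\cap C^2$ equals $u_1\varphi_0+\sum_j p_j\varphi_j+u_{n+1}\varphi_{n+2}$ with $p_j=s(t_j)$, $u_1=s''(t_1)$, $u_{n+1}=s''(t_{n+1})$. *)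

From Stdlib Require Import Reals.
From Coquelicot Require Import Coquelicot.
Open Scope R_scope.

Definition has_deriv_on (a b : R) (f f' : R -> R) : Prop :=
  forall x, a <= x <= b ->
  forall eps, 0 < eps -> exists delta, 0 < delta /\
    forall y, a <= y <= b -> Rabs (y - x) < delta ->
      Rabs (f y - f x - f' x * (y - x)) <= eps * Rabs (y - x).

Definition cont_on (a b : R) (g : R -> R) : Prop :=
  forall x, a <= x <= b ->
  forall eps, 0 < eps -> exists delta, 0 < delta /\
    forall y, a <= y <= b -> Rabs (y - x) < delta -> Rabs (g y - g x) < eps.

Definition C2_on (a b : R) (s s2 : R -> R) : Prop :=
  exists s1, has_deriv_on a b s s1 /\ has_deriv_on a b s1 s2 /\ cont_on a b s2.

(* knots t_1 < ... < t_{n+1} (t indexed by nat, indices 1..n+1 are used) *)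
Definition knots_incr (n : nat) (t : nat -> R) : Prop :=
  forall i, (1 <= i <= n)%nat -> t i < t (S i).

Definition piecewise_cubic (n : nat) (t : nat -> R) (s : R -> R) : Prop :=
  forall i, (1 <= i <= n)%nat ->
  exists c0 c1 c2 c3 : R, forall x, t i <= x <= t (S i) ->
    s x = c0 + c1 * x + c2 * x ^ 2 + c3 * x ^ 3.

Definition S3C2 (n : nat) (t : nat -> R) (s s2 : R -> R) : Prop :=
  piecewise_cubic n t s /\ C2_on (t 1%nat) (t (S n)) s s2.

Definition natural_basis (n : nat) (t : nat -> R) (phi phi2 : nat -> R -> R) : Prop :=
  (forall k, (k <= n + 2)%nat -> S3C2 n t (phi k) (phi2 k)) /\
  (forall i, (1 <= i <= n + 1)%nat -> phi 0%nat (t i) = 0) /\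
  phi2 0%nat (t 1%nat) = 1 /\ phi2 0%nat (t (S n)) = 0 /\
  (forall j, (1 <= j <= n + 1)%nat ->
     (forall i, (1 <= i <= n + 1)%nat ->
        phi j (t i) = if Nat.eqb i j then 1 else 0) /\
     phi2 j (t 1%nat) = 0 /\ phi2 j (t (S n)) = 0) /\
  (forall i, (1 <= i <= n + 1)%nat -> phi (n + 2)%nat (t i) = 0) /\
  phi2 (n + 2)%nat (t 1%nat) = 0 /\ phi2 (n + 2)%nat (t (S n)) = 1.

Definition Cmat (n : nat) (t : nat -> R) (phi2 : nat -> R -> R) (k l : nat) : R :=
  RInt (fun x => phi2 (k - 1)%nat x * phi2 (l - 1)%nat x) (t 1%nat) (t (S n)).

Definition qform (m : nat -> nat -> R) (lo hi : nat) (v : nat -> R) : R :=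
  sum_n_m (fun k => sum_n_m (fun l => v k * m k l * v l) lo hi) lo hi.

(* the vector (u_1, p_1, ..., p_{n+1}, u_{n+1}), indexed 1..n+3 *)
Definition ext_vec (n : nat) (u1 : R) (p : nat -> R) (un1 : R) (k : nat) : R :=
  if Nat.eqb k 1 then u1 else if Nat.eqb k (n + 3) then un1 else p (k - 1)%nat.

(* p (indices 1..n+1) lies in the range R(L), L having rows (1, t_i) *)
Definition in_range_L (n : nat) (t : nat -> R) (p : nat -> R) : Prop :=
  exists a b : R, forall i, (1 <= i <= n + 1)%nat -> p i = a + b * t i.

(* C is the Gram matrix of the second derivatives of the natural basis in
   L^2[t_1, t_(n+1)], so v^T C v is the integral of s''^2 for the spline s with
   coefficient vector v; this gives symmetry, nonnegativity and (vi).
   Second derivatives of splines are continuous and piecewise affine, and if g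
   is a spline vanishing at every knot and h is piecewise affine vanishing at
   t_1 and t_(n+1), integration by parts on each [t_i, t_(i+1)] gives
   int g'' h = 0.  This kills the border entries c_(1,j+1), c_(n+3,j+1), and
   shows that u_1 = u_(n+1) = 0 with p in R(L) makes s'' orthogonal to itself.
   Conversely, int s''^2 = 0 forces s'' = 0, so s is affine: u_1 = s''(t_1) = 0,
   u_(n+1) = 0 and p_i = s(t_i) lies in R(L).  Definiteness of the corner block
   (case p = 0) and the null space of C(2,n+2) (case u_1 = u_(n+1) = 0) are
   special cases of this characterisation. *)

From Stdlib Require Import Reals Lra Lia FunctionalExtensionality.
From Coquelicot Require Import Coquelicot.
Open Scope R_scope.

(** * Continuity on a closed interval *)

Definition clamp (a b x : R) : R := Rmax a (Rmin b x).

Lemma clamp_in a b x : a <= b -> a <= clamp a b x <= b.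
Proof. unfold clamp, Rmax, Rmin; repeat destruct Rle_dec; lra. Qed.

Lemma clamp_id a b x : a <= x <= b -> clamp a b x = x.
Proof. unfold clamp, Rmax, Rmin; repeat destruct Rle_dec; lra. Qed.

Lemma clamp_left a b x : a <= b -> x <= a -> clamp a b x = a.
Proof. unfold clamp, Rmax, Rmin; repeat destruct Rle_dec; lra. Qed.

Lemma clamp_right a b x : a <= b -> b <= x -> clamp a b x = b.
Proof. unfold clamp, Rmax, Rmin; repeat destruct Rle_dec; lra. Qed.

Lemma clamp_lipschitz a b x y : a <= b -> Rabs (clamp a b x - clamp a b y) <= Rabs (x - y).
Proof.
  unfold clamp, Rmax, Rmin; repeat destruct Rle_dec; unfold Rabs;
  repeat destruct Rcase_abs; lra.
Qed.

Lemma continuous_clamp a b x : a <= b -> continuous (clamp a b) x.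
Proof.
  intros Hab; apply continuity_pt_filterlim; intros eps Heps.
  exists eps; split; [exact Heps|]; intros y [_ Hy]; simpl in *; unfold R_dist in *.
  exact (Rle_lt_trans _ _ _ (clamp_lipschitz a b y x Hab) Hy).
Qed.

Lemma cont_on_continuous_clamp a b f x :
  a <= b -> cont_on a b f -> continuous (fun y => f (clamp a b y)) x.
Proof.
  intros Hab Hf; apply continuity_pt_filterlim; intros eps Heps.
  destruct (Hf _ (clamp_in a b x Hab) eps Heps) as [d [Hd Hy]].
  exists d; split; [exact Hd|]; intros y [_ Hyx]; simpl in *; unfold R_dist in *.
  apply Hy; [apply clamp_in; exact Hab|].
  exact (Rle_lt_trans _ _ _ (clamp_lipschitz a b y x Hab) Hyx).
Qed.

Lemma continuous_clamp_cont_on a b f :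
  (forall x, continuous (fun y => f (clamp a b y)) x) -> cont_on a b f.
Proof.
  intros Hf x Hx eps Heps.
  destruct (proj2 (continuity_pt_filterlim _ x) (Hf x) eps Heps) as [d [Hd Hy]].
  exists d; split; [exact Hd|]; intros y Hya Hyx.
  destruct (Req_dec y x) as [->|Hne]; [rewrite Rminus_diag, Rabs_R0; exact Heps|].
  specialize (Hy y (conj (conj I (not_eq_sym Hne)) Hyx)); simpl in Hy.
  unfold R_dist in Hy; rewrite !clamp_id in Hy by lra; exact Hy.
Qed.

Lemma continuous_cont_on a b f : a <= b -> (forall x, continuous f x) -> cont_on a b f.
Proof.
  intros Hab Hf; apply continuous_clamp_cont_on; intros x.
  exact (continuous_comp (clamp a b) f x (continuous_clamp a b x Hab) (Hf _)).
Qed.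

Lemma cont_on_const a b k : cont_on a b (fun _ => k).
Proof.
  intros x _ eps Heps; exists 1; split; [lra|]; intros.
  rewrite Rminus_diag, Rabs_R0; exact Heps.
Qed.

Lemma cont_on_plus a b f g : a <= b -> cont_on a b f -> cont_on a b g ->
  cont_on a b (fun x => f x + g x).
Proof.
  intros Hab Hf Hg; apply continuous_clamp_cont_on; intros x.
  apply (continuous_plus (fun y => f (clamp a b y)) (fun y => g (clamp a b y)));
  apply cont_on_continuous_clamp; assumption.
Qed.

Lemma cont_on_mult a b f g : a <= b -> cont_on a b f -> cont_on a b g ->
  cont_on a b (fun x => f x * g x).
Proof.
  intros Hab Hf Hg; apply continuous_clamp_cont_on; intros x.
  apply (continuous_mult (fun y => f (clamp a b y)) (fun y => g (clamp a b y)));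
  apply cont_on_continuous_clamp; assumption.
Qed.

Lemma cont_on_sub a b c d f : a <= c -> d <= b -> cont_on a b f -> cont_on c d f.
Proof.
  intros Hac Hdb Hf x Hx eps Heps; destruct (Hf x ltac:(lra) eps Heps) as [r [Hr Hy]].
  exists r; split; [exact Hr|]; intros y Hy1 Hy2; apply Hy; [lra|exact Hy2].
Qed.

Lemma ex_RInt_cont_on a b f : a <= b -> cont_on a b f -> ex_RInt f a b.
Proof.
  intros Hab Hf; apply ex_RInt_ext with (fun y => f (clamp a b y)).
  - intros x Hx; rewrite Rmin_left, Rmax_right in Hx by exact Hab.
    rewrite clamp_id; [reflexivity|lra].
  - apply (ex_RInt_continuous (V := R_CompleteNormedModule)); intros x _.
    apply cont_on_continuous_clamp; assumption.
Qed.

(** * Derivatives on a closed interval *)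

(* Outside [a,b], [F] is continued by its tangent lines at the endpoints; this
   turns a derivative on the closed interval into a derivative on all of [R]. *)
Definition tangent_ext (a b : R) (F f : R -> R) (x : R) : R :=
  F (clamp a b x) + f (clamp a b x) * (x - clamp a b x).

Lemma tangent_ext_id a b F f x : a <= x <= b -> tangent_ext a b F f x = F x.
Proof. intros Hx; unfold tangent_ext; rewrite clamp_id by exact Hx; ring. Qed.

Lemma derivable_pt_lim_of_bound E x l :
  (forall eps, 0 < eps -> exists delta, 0 < delta /\ forall y, Rabs (y - x) < delta ->
     Rabs (E y - E x - l * (y - x)) <= eps * Rabs (y - x)) ->
  derivable_pt_lim E x l.
Proof.
  intros H eps Heps; destruct (H (eps / 2)) as [d [Hd Hy]]; [lra|].
  exists (mkposreal d Hd); intros h Hh0 Hh; simpl in Hh.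
  specialize (Hy (x + h)); replace (x + h - x) with h in Hy by ring.
  specialize (Hy Hh).
  replace ((E (x + h) - E x) / h - l) with ((E (x + h) - E x - l * h) / h) by (field; exact Hh0).
  unfold Rdiv; rewrite Rabs_mult, Rabs_inv.
  assert (0 < Rabs h) by (apply Rabs_pos_lt; exact Hh0).
  apply Rle_lt_trans with (eps / 2 * Rabs h * / Rabs h).
  - apply Rmult_le_compat_r; [left; apply Rinv_0_lt_compat|]; assumption.
  - field_simplify; lra.
Qed.

Lemma Rabs_R0_le_mult_Rabs eps z : 0 <= eps -> Rabs 0 <= eps * Rabs z.
Proof. intros; rewrite Rabs_R0; apply Rmult_le_pos; [assumption|apply Rabs_pos]. Qed.

Lemma derivable_pt_lim_tangent_ext a b F f : a < b -> has_deriv_on a b F f ->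
  forall x, derivable_pt_lim (tangent_ext a b F f) x (f (clamp a b x)).
Proof.
  intros Hab HF x; apply derivable_pt_lim_of_bound; intros eps Heps.
  destruct (Rlt_le_dec x a) as [Hxa|Hxa].
  { exists (a - x); split; [lra|]; intros y Hy.
    assert (y < a) by (unfold Rabs in Hy; destruct Rcase_abs in Hy; lra).
    unfold tangent_ext; rewrite !(clamp_left a b) by lra.
    replace (_ - _ - _) with 0 by ring; apply Rabs_R0_le_mult_Rabs; lra. }
  destruct (Rlt_le_dec b x) as [Hxb|Hxb].
  { exists (x - b); split; [lra|]; intros y Hy.
    assert (b < y) by (unfold Rabs in Hy; destruct Rcase_abs in Hy; lra).
    unfold tangent_ext; rewrite !(clamp_right a b) by lra.
    replace (_ - _ - _) with 0 by ring; apply Rabs_R0_le_mult_Rabs; lra. }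
  rewrite clamp_id, tangent_ext_id by lra.
  destruct (HF x (conj Hxa Hxb) eps Heps) as [d [Hd Hy]].
  (* near an endpoint the outer side is affine; otherwise stay inside [a,b] *)
  assert (Hda : exists da, 0 < da /\ (x = a \/ da <= x - a)).
  { destruct Hxa as [Hxa|Hxa]; [exists (x - a)|exists 1]; split; auto; lra. }
  assert (Hdb : exists db, 0 < db /\ (x = b \/ db <= b - x)).
  { destruct Hxb as [Hxb|Hxb]; [exists (b - x)|exists 1]; split; auto; lra. }
  destruct Hda as [da [Hda Hxa']], Hdb as [db [Hdb Hxb']].
  exists (Rmin d (Rmin da db)); split; [repeat apply Rmin_pos; assumption|]; intros y Hyx.
  pose proof (Rmin_l d (Rmin da db)); pose proof (Rmin_r d (Rmin da db)).
  pose proof (Rmin_l da db); pose proof (Rmin_r da db).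
  destruct (Rlt_le_dec y a) as [Hya|Hya].
  { destruct Hxa' as [->|Hxa'].
    - unfold tangent_ext; rewrite clamp_left by lra.
      replace (_ - _ - _) with 0 by ring; apply Rabs_R0_le_mult_Rabs; lra.
    - exfalso; unfold Rabs in Hyx; destruct Rcase_abs in Hyx; lra. }
  destruct (Rlt_le_dec b y) as [Hyb|Hyb].
  { destruct Hxb' as [->|Hxb'].
    - unfold tangent_ext; rewrite clamp_right by lra.
      replace (_ - _ - _) with 0 by ring; apply Rabs_R0_le_mult_Rabs; lra.
    - exfalso; unfold Rabs in Hyx; destruct Rcase_abs in Hyx; lra. }
  rewrite tangent_ext_id by lra; apply Hy; lra.
Qed.

Lemma is_derive_tangent_ext a b F f : a < b -> has_deriv_on a b F f ->
  forall x, is_derive (tangent_ext a b F f) x (f (clamp a b x)).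
Proof. intros; apply is_derive_Reals, derivable_pt_lim_tangent_ext; assumption. Qed.

Lemma has_deriv_on_of_derivable a b G g F :
  (forall x, a <= x <= b -> derivable_pt_lim G x (g x)) ->
  (forall x, a <= x <= b -> G x = F x) -> has_deriv_on a b F g.
Proof.
  intros Hg HGF x Hx eps Heps; destruct (Hg x Hx eps Heps) as [d Hd].
  exists d; split; [apply cond_pos|]; intros y Hy Hyx; rewrite <- !HGF by assumption.
  destruct (Req_dec y x) as [->|Hne].
  { replace (_ - _ - _) with 0 by ring; apply Rabs_R0_le_mult_Rabs; lra. }
  specialize (Hd (y - x) ltac:(lra) Hyx); replace (x + (y - x)) with y in Hd by ring.
  replace (G y - G x - g x * (y - x)) with ((y - x) * ((G y - G x) / (y - x) - g x))
    by (field; lra).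
  rewrite Rabs_mult, Rmult_comm; apply Rmult_le_compat_r; [apply Rabs_pos|lra].
Qed.

Lemma has_deriv_on_of_is_derive a b F f : (forall x, is_derive F x (f x)) -> has_deriv_on a b F f.
Proof.
  intros HF; apply has_deriv_on_of_derivable with F; [|reflexivity].
  intros; apply is_derive_Reals, HF.
Qed.

Lemma has_deriv_on_const a b k : has_deriv_on a b (fun _ => k) (fun _ => 0).
Proof. apply has_deriv_on_of_is_derive; intros; auto_derive; auto. Qed.

Lemma has_deriv_on_affine a b al be : has_deriv_on a b (fun x => al + be * x) (fun _ => be).
Proof. apply has_deriv_on_of_is_derive; intros; auto_derive; auto; ring. Qed.

Lemma has_deriv_on_plus a b F f G g : a < b -> has_deriv_on a b F f -> has_deriv_on a b G g ->
  has_deriv_on a b (fun x => F x + G x) (fun x => f x + g x).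
Proof.
  intros Hab HF HG.
  apply has_deriv_on_of_derivable with (fun x => tangent_ext a b F f x + tangent_ext a b G g x).
  - intros x Hx; apply is_derive_Reals.
    replace (f x + g x) with (plus (f (clamp a b x)) (g (clamp a b x)))
      by (rewrite clamp_id by exact Hx; reflexivity).
    apply (is_derive_plus (tangent_ext a b F f)); apply is_derive_tangent_ext; assumption.
  - intros; rewrite !tangent_ext_id by assumption; reflexivity.
Qed.

Lemma has_deriv_on_mult a b F f G g : a < b -> has_deriv_on a b F f -> has_deriv_on a b G g ->
  has_deriv_on a b (fun x => F x * G x) (fun x => f x * G x + F x * g x).
Proof.
  intros Hab HF HG.
  apply has_deriv_on_of_derivable with (fun x => tangent_ext a b F f x * tangent_ext a b G g x).
  - intros x Hx; apply is_derive_Reals.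
    replace (f x * G x + F x * g x) with
      (plus (scal (f (clamp a b x)) (tangent_ext a b G g x))
            (scal (tangent_ext a b F f x) (g (clamp a b x))))
      by (rewrite !tangent_ext_id, clamp_id by exact Hx; reflexivity).
    apply (is_derive_mult (tangent_ext a b F f)); try (apply is_derive_tangent_ext; assumption).
    intros; apply Rmult_comm.
  - intros; rewrite !tangent_ext_id by assumption; reflexivity.
Qed.

Lemma has_deriv_on_ext a b F f g : (forall x, a <= x <= b -> f x = g x) ->
  has_deriv_on a b F f -> has_deriv_on a b F g.
Proof. intros Hfg HF x Hx; rewrite <- Hfg by exact Hx; apply HF, Hx. Qed.

Lemma has_deriv_on_ext_fun a b F G f : (forall x, a <= x <= b -> F x = G x) ->
  has_deriv_on a b F f -> has_deriv_on a b G f.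
Proof.
  intros HFG HF x Hx eps Heps; destruct (HF x Hx eps Heps) as [d [Hd Hy]].
  exists d; split; [exact Hd|]; intros y Hy1 Hy2; rewrite <- !HFG by assumption; auto.
Qed.

Lemma has_deriv_on_scal a b k F f : a < b -> has_deriv_on a b F f ->
  has_deriv_on a b (fun x => k * F x) (fun x => k * f x).
Proof.
  intros Hab HF; eapply has_deriv_on_ext;
    [|apply has_deriv_on_mult; [exact Hab|apply has_deriv_on_const|exact HF]].
  intros; simpl; ring.
Qed.

Lemma has_deriv_on_sub a b c d F f : a <= c -> d <= b ->
  has_deriv_on a b F f -> has_deriv_on c d F f.
Proof.
  intros Hac Hdb HF x Hx eps Heps; destruct (HF x ltac:(lra) eps Heps) as [r [Hr Hy]].
  exists r; split; [exact Hr|]; intros y Hy1 Hy2; apply Hy; [lra|exact Hy2].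
Qed.

Lemma has_deriv_on_unique a b F f g : a < b -> has_deriv_on a b F f -> has_deriv_on a b F g ->
  forall x, a <= x <= b -> f x = g x.
Proof.
  intros Hab Hf Hg x Hx; destruct (Req_dec (f x) (g x)) as [|Hne]; [assumption|exfalso].
  set (e := Rabs (f x - g x)); assert (He : 0 < e) by (apply Rabs_pos_lt; lra).
  destruct (Hf x Hx (e / 4)) as [d1 [Hd1 Hy1]]; [lra|].
  destruct (Hg x Hx (e / 4)) as [d2 [Hd2 Hy2]]; [lra|].
  set (h := Rmin (Rmin d1 d2) (b - a) / 2).
  pose proof (Rmin_l (Rmin d1 d2) (b - a)); pose proof (Rmin_r (Rmin d1 d2) (b - a)).
  pose proof (Rmin_l d1 d2); pose proof (Rmin_r d1 d2).
  assert (0 < Rmin (Rmin d1 d2) (b - a)) by (repeat apply Rmin_pos; lra).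
  assert (exists y, a <= y <= b /\ Rabs (y - x) = h) as [y [Hy Hyh]].
  { destruct (Rle_dec (x + h) b).
    - exists (x + h); split; [unfold h in *; lra|].
      replace (x + h - x) with h by ring; apply Rabs_right; unfold h; lra.
    - exists (x - h); split; [unfold h in *; lra|].
      replace (x - h - x) with (- h) by ring; rewrite Rabs_Ropp; apply Rabs_right; unfold h; lra. }
  specialize (Hy1 y Hy ltac:(unfold h in *; lra)); specialize (Hy2 y Hy ltac:(unfold h in *; lra)).
  assert (Habs : Rabs ((f x - g x) * (y - x)) <= e / 2 * Rabs (y - x)).
  { replace ((f x - g x) * (y - x)) with
      ((F y - F x - g x * (y - x)) - (F y - F x - f x * (y - x))) by ring.
    eapply Rle_trans; [apply Rabs_triang|]; rewrite Rabs_Ropp; lra. }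
  rewrite Rabs_mult in Habs; fold e in Habs; rewrite Hyh in Habs.
  assert (0 < h) by (unfold h; lra); nra.
Qed.

Lemma is_RInt_has_deriv_on a b F f : a < b -> has_deriv_on a b F f -> cont_on a b f ->
  is_RInt f a b (F b - F a).
Proof.
  intros Hab HF Hf; apply is_RInt_ext with (fun y => f (clamp a b y)).
  { intros x Hx; rewrite Rmin_left, Rmax_right in Hx by lra; rewrite clamp_id; [reflexivity|lra]. }
  replace (F b - F a) with (minus (tangent_ext a b F f b) (tangent_ext a b F f a))
    by (rewrite !tangent_ext_id by lra; reflexivity).
  apply (is_RInt_derive (V := R_CompleteNormedModule)); intros.
  - apply is_derive_tangent_ext; assumption.
  - apply cont_on_continuous_clamp; [lra|exact Hf].
Qed.

Lemma is_RInt_unique_R f a b (l1 l2 : R) : is_RInt f a b l1 -> is_RInt f a b l2 -> l1 = l2.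
Proof.
  intros H1 H2; apply (is_RInt_unique (V := R_CompleteNormedModule)) in H1, H2; congruence.
Qed.

Lemma is_RInt_zero a b : is_RInt (fun _ => 0) a b 0.
Proof.
  pose proof (is_RInt_const (V := R_NormedModule) a b 0) as H.
  unfold scal in H; simpl in H; unfold mult in H; simpl in H; rewrite Rmult_0_r in H; exact H.
Qed.

Lemma affine_of_deriv2_eq0 a b g g1 g2 : a < b -> has_deriv_on a b g g1 -> has_deriv_on a b g1 g2 ->
  (forall x, a <= x <= b -> g2 x = 0) ->
  exists al be, forall x, a <= x <= b -> g x = al + be * x.
Proof.
  intros Hab Hg Hg1 Hz.
  assert (Hc : forall x, a <= x <= b -> g1 x = g1 a).
  { intros x Hx; destruct (Req_dec x a) as [->|Hne]; [reflexivity|].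
    assert (H := is_RInt_has_deriv_on a x g1 (fun _ => 0) ltac:(lra)
      (has_deriv_on_ext a x g1 g2 _ (fun y Hy => Hz y ltac:(lra))
         (has_deriv_on_sub a b a x _ _ ltac:(lra) ltac:(lra) Hg1)) (cont_on_const a x 0)).
    pose proof (is_RInt_unique_R _ _ _ _ _ H (is_RInt_zero a x)); lra. }
  exists (g a - g1 a * a), (g1 a); intros x Hx.
  destruct (Req_dec x a) as [->|Hne]; [ring|].
  assert (H := is_RInt_has_deriv_on a x g (fun _ => g1 a) ltac:(lra)
      (has_deriv_on_ext a x g g1 _ (fun y Hy => Hc y ltac:(lra))
         (has_deriv_on_sub a b a x _ _ ltac:(lra) ltac:(lra) Hg)) (cont_on_const a x _)).
  pose proof (is_RInt_unique_R _ _ _ _ _ H (is_RInt_const (V := R_NormedModule) a x (g1 a))) as E.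
  unfold scal in E; simpl in E; unfold mult in E; simpl in E; lra.
Qed.

Lemma cubic_deriv2 c d h h1 h2 c0 c1 c2 c3 : c < d ->
  has_deriv_on c d h h1 -> has_deriv_on c d h1 h2 ->
  (forall x, c <= x <= d -> h x = c0 + c1 * x + c2 * x ^ 2 + c3 * x ^ 3) ->
  forall x, c <= x <= d -> h2 x = 2 * c2 + 6 * c3 * x.
Proof.
  intros Hcd Hh Hh1 Hq.
  assert (Q1 : has_deriv_on c d h (fun x => c1 + 2 * c2 * x + 3 * c3 * x ^ 2)).
  { apply has_deriv_on_ext_fun with (fun x => c0 + c1 * x + c2 * x ^ 2 + c3 * x ^ 3).
    - intros; symmetry; auto.
    - apply has_deriv_on_of_is_derive; intros; auto_derive; auto; ring. }
  apply (has_deriv_on_unique c d (fun x => c1 + 2 * c2 * x + 3 * c3 * x ^ 2)); [exact Hcd| |].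
  - exact (has_deriv_on_ext_fun c d _ _ _ (has_deriv_on_unique c d h _ _ Hcd Hh Q1) Hh1).
  - apply has_deriv_on_of_is_derive; intros; auto_derive; auto; ring.
Qed.

(** * Integrals of squares and finite sums *)

Lemma is_RInt_sqr_ge0 a b f l : a <= b -> is_RInt (fun x => f x * f x) a b l -> 0 <= l.
Proof. intros Hab H; apply (is_RInt_ge_0 _ a b l Hab H); intros; nra. Qed.

Lemma is_RInt_sqr_eq0 a b f : a < b -> cont_on a b f -> is_RInt (fun x => f x * f x) a b 0 ->
  forall x, a <= x <= b -> f x = 0.
Proof.
  intros Hab Hf HI x0 Hx0; destruct (Req_dec (f x0) 0) as [|Hne]; [assumption|exfalso].
  set (e := f x0 * f x0); assert (He : 0 < e) by (unfold e; nra).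
  assert (Hf2 : cont_on a b (fun x => f x * f x)) by (apply cont_on_mult; lra || assumption).
  destruct (Hf2 x0 Hx0 (e / 2)) as [d [Hd Hnear]]; [lra|].
  (* f^2 > e/2 on [c, c'], a subinterval of [a,b] of positive length around x0 *)
  set (c := Rmax a (x0 - d / 2)); set (c' := Rmin b (x0 + d / 2)).
  assert (Hcc' : c < c') by (unfold c, c', Rmax, Rmin; repeat destruct Rle_dec; lra).
  assert (Hac : a <= c) by apply Rmax_l.
  assert (Hc'b : c' <= b) by apply Rmin_l.
  assert (Ex : forall u v, a <= u -> u <= v -> v <= b -> ex_RInt (fun x => f x * f x) u v).
  { intros u v Hu Huv Hv; apply ex_RInt_cont_on; [exact Huv|exact (cont_on_sub a b u v _ Hu Hv Hf2)]. }
  apply (is_RInt_unique (V := R_CompleteNormedModule)) in HI.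
  rewrite <- (RInt_Chasles _ a c b), <- (RInt_Chasles _ c c' b) in HI; try (apply Ex; lra).
  simpl in HI; unfold plus in HI; simpl in HI.
  assert (P1 : 0 <= RInt (fun x => f x * f x) a c) by (apply RInt_ge_0; [lra|apply Ex; lra|intros; nra]).
  assert (P3 : 0 <= RInt (fun x => f x * f x) c' b) by (apply RInt_ge_0; [lra|apply Ex; lra|intros; nra]).
  assert (P2 : RInt (fun _ => e / 2) c c' <= RInt (fun x => f x * f x) c c').
  { apply RInt_le; [lra|apply ex_RInt_const|apply Ex; lra|].
    intros x Hx; specialize (Hnear x).
    assert (Hxd : Rabs (x - x0) < d).
    { unfold c, c', Rmax, Rmin in Hx; repeat destruct Rle_dec in Hx;
      unfold Rabs; destruct Rcase_abs; lra. }
    specialize (Hnear ltac:(unfold c, c' in *; split; lra) Hxd); fold e in Hnear.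
    unfold Rabs in Hnear; destruct Rcase_abs in Hnear; lra. }
  rewrite RInt_const in P2; unfold scal in P2; simpl in P2; unfold mult in P2; simpl in P2.
  assert (0 < (c' - c) * (e / 2)) by (apply Rmult_lt_0_compat; lra); lra.
Qed.

Lemma sum_n_m_eq0 (u : nat -> R) m M :
  (forall k, (m <= k <= M)%nat -> u k = 0) -> sum_n_m u m M = 0.
Proof.
  intros H; rewrite (sum_n_m_ext_loc u (fun _ => zero)).
  - apply (sum_n_m_const_zero (G := R_AbelianMonoid)).
  - intros k Hk; rewrite H by exact Hk; reflexivity.
Qed.

Lemma sum_n_m_delta (u : nat -> R) m M i : (m <= i <= M)%nat ->
  (forall k, (m <= k <= M)%nat -> k <> i -> u k = 0) -> sum_n_m u m M = u i.
Proof.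
  intros Hi H; rewrite (sum_n_m_Chasles u m i M) by lia.
  rewrite (sum_n_m_eq0 u (S i) M) by (intros; apply H; lia).
  destruct i as [|i].
  - replace m with 0%nat by lia; rewrite sum_n_n; simpl; unfold plus; simpl; ring.
  - rewrite sum_n_Sm by lia; rewrite (sum_n_m_eq0 u m i) by (intros; apply H; lia).
    simpl; unfold plus; simpl; ring.
Qed.

Lemma sum_n_m_fun_Sm (F : nat -> R -> R) m M : (m <= S M)%nat ->
  (fun x => sum_n_m (fun k => F k x) m (S M)) =
  (fun x => sum_n_m (fun k => F k x) m M + F (S M) x).
Proof. intros; apply functional_extensionality; intros; rewrite sum_n_Sm; auto. Qed.

Lemma sum_n_m_fun_empty (F : nat -> R -> R) m M : (M < m)%nat ->
  (fun x => sum_n_m (fun k => F k x) m M) = (fun _ => 0).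
Proof. intros; apply functional_extensionality; intros; rewrite sum_n_m_zero; auto. Qed.

Lemma sum_n_m_fun_closed2 (P : (R -> R) -> (R -> R) -> Prop) :
  P (fun _ => 0) (fun _ => 0) ->
  (forall f1 f2 g1 g2, P f1 f2 -> P g1 g2 -> P (fun x => f1 x + g1 x) (fun x => f2 x + g2 x)) ->
  forall (F G : nat -> R -> R) m M, (forall k, (m <= k <= M)%nat -> P (F k) (G k)) ->
  P (fun x => sum_n_m (fun k => F k x) m M) (fun x => sum_n_m (fun k => G k x) m M).
Proof.
  intros P0 Pplus F G m M; induction M as [|M IH]; intros HFG.
  - destruct m as [|m].
    + replace (fun x => sum_n_m (fun k => F k x) 0 0) with (F 0%nat)
        by (apply functional_extensionality; intros; rewrite sum_n_n; reflexivity).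
      replace (fun x => sum_n_m (fun k => G k x) 0 0) with (G 0%nat)
        by (apply functional_extensionality; intros; rewrite sum_n_n; reflexivity).
      apply HFG; lia.
    + rewrite !sum_n_m_fun_empty by lia; exact P0.
  - destruct (Compare_dec.le_dec m (S M)).
    + rewrite !sum_n_m_fun_Sm by assumption.
      apply Pplus; [apply IH; intros; apply HFG|apply HFG]; lia.
    + rewrite !sum_n_m_fun_empty by lia; exact P0.
Qed.

Lemma sum_n_m_fun_closed (P : (R -> R) -> Prop) :
  P (fun _ => 0) -> (forall f g, P f -> P g -> P (fun x => f x + g x)) ->
  forall (F : nat -> R -> R) m M, (forall k, (m <= k <= M)%nat -> P (F k)) ->
  P (fun x => sum_n_m (fun k => F k x) m M).
Proof.
  intros P0 Pplus F m M HF.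
  exact (sum_n_m_fun_closed2 (fun f _ => P f) P0 (fun f1 _ g1 _ => Pplus f1 g1) F F m M HF).
Qed.

Lemma is_RInt_scal_R a b f l k : is_RInt f a b l -> is_RInt (fun x => k * f x) a b (k * l).
Proof. exact (is_RInt_scal (V := R_NormedModule) f a b k l). Qed.

Lemma is_RInt_plus_R a b f g l1 l2 : is_RInt f a b l1 -> is_RInt g a b l2 ->
  is_RInt (fun x => f x + g x) a b (l1 + l2).
Proof. exact (is_RInt_plus (V := R_NormedModule) f g a b l1 l2). Qed.

Lemma is_RInt_sum_n_m a b (F : nat -> R -> R) (I : nat -> R) m M :
  (forall k, (m <= k <= M)%nat -> is_RInt (F k) a b (I k)) ->
  is_RInt (fun x => sum_n_m (fun k => F k x) m M) a b (sum_n_m I m M).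
Proof.
  induction M as [|M IH]; intros HF.
  - destruct m as [|m].
    + rewrite sum_n_n; eapply is_RInt_ext; [|apply HF; lia].
      intros; rewrite sum_n_n; reflexivity.
    + rewrite sum_n_m_zero, sum_n_m_fun_empty by lia; apply is_RInt_zero.
  - destruct (Compare_dec.le_dec m (S M)).
    + rewrite sum_n_m_fun_Sm, sum_n_Sm by assumption.
      apply is_RInt_plus_R; [apply IH; intros; apply HF|apply HF]; lia.
    + rewrite sum_n_m_zero, sum_n_m_fun_empty by lia; apply is_RInt_zero.
Qed.

Lemma sum_n_m_Rmult_r (a : R) (u : nat -> R) m M :
  sum_n_m u m M * a = sum_n_m (fun k => u k * a) m M.
Proof. exact (eq_sym (sum_n_m_mult_r a u m M)). Qed.

Lemma sum_n_m_Rmult_l (a : R) (u : nat -> R) m M :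
  a * sum_n_m u m M = sum_n_m (fun k => a * u k) m M.
Proof. exact (eq_sym (sum_n_m_mult_l a u m M)). Qed.

Lemma is_RInt_sum_n_m_mult a b (f g : nat -> R -> R) (C : nat -> nat -> R)
    (u v : nat -> R) m1 M1 m2 M2 :
  (forall k l, (m1 <= k <= M1)%nat -> (m2 <= l <= M2)%nat ->
     is_RInt (fun x => f k x * g l x) a b (C k l)) ->
  is_RInt (fun x => sum_n_m (fun k => u k * f k x) m1 M1 * sum_n_m (fun l => v l * g l x) m2 M2)
    a b (sum_n_m (fun k => sum_n_m (fun l => u k * C k l * v l) m2 M2) m1 M1).
Proof.
  intros H.
  apply is_RInt_ext with
    (fun x => sum_n_m (fun k => sum_n_m (fun l => u k * (v l * (f k x * g l x))) m2 M2) m1 M1).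
  { intros x _; rewrite sum_n_m_Rmult_r; apply sum_n_m_ext_loc; intros k _.
    rewrite Rmult_assoc, !sum_n_m_Rmult_l; apply sum_n_m_ext_loc; intros; simpl; ring. }
  apply is_RInt_sum_n_m; intros k Hk; apply is_RInt_sum_n_m; intros l Hl.
  replace (u k * C k l * v l) with (u k * (v l * C k l)) by ring.
  apply is_RInt_scal_R, is_RInt_scal_R, H; assumption.
Qed.

(** * Piecewise affine functions and cubic splines *)

Lemma knots_le n t : knots_incr n t ->
  forall i j, (1 <= i <= j)%nat -> (j <= n + 1)%nat -> t i <= t j.
Proof.
  intros Ht i j Hij Hj; induction j as [|j IH]; [lia|].
  destruct (Nat.eq_dec i (S j)) as [->|Hne]; [lra|].
  assert (t j <= t (S j)) by (left; apply Ht; lia).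
  assert (t i <= t j) by (apply IH; lia); lra.
Qed.

Lemma knots_first_lt_last n t : (1 <= n)%nat -> knots_incr n t -> t 1%nat < t (S n).
Proof.
  intros Hn Ht; assert (t 1%nat < t 2%nat) by (apply Ht; lia).
  assert (t 2%nat <= t (S n)) by (apply (knots_le n t Ht); lia); lra.
Qed.

Definition pw_affine (n : nat) (t : nat -> R) (h : R -> R) : Prop :=
  forall i, (1 <= i <= n)%nat ->
  exists al be, forall x, t i <= x <= t (S i) -> h x = al + be * x.

Lemma pw_affine_zero n t : pw_affine n t (fun _ => 0).
Proof. intros i Hi; exists 0, 0; intros; ring. Qed.

Lemma pw_affine_plus n t f g : pw_affine n t f -> pw_affine n t g ->
  pw_affine n t (fun x => f x + g x).
Proof.
  intros Hf Hg i Hi; destruct (Hf i Hi) as [a1 [b1 H1]], (Hg i Hi) as [a2 [b2 H2]].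
  exists (a1 + a2), (b1 + b2); intros x Hx; rewrite H1, H2 by exact Hx; ring.
Qed.

Lemma pw_affine_scal n t k f : pw_affine n t f -> pw_affine n t (fun x => k * f x).
Proof.
  intros Hf i Hi; destruct (Hf i Hi) as [a1 [b1 H1]].
  exists (k * a1), (k * b1); intros x Hx; rewrite H1 by exact Hx; ring.
Qed.

Lemma pw_affine_deriv2 n t s s2 : knots_incr n t -> S3C2 n t s s2 -> pw_affine n t s2.
Proof.
  intros Ht [Hcubic [s1 [Hs1 [Hs2 _]]]] i Hi.
  destruct (Hcubic i Hi) as [c0 [c1 [c2 [c3 Hq]]]].
  assert (Hlt : t i < t (S i)) by (apply Ht; lia).
  assert (L1 : t 1%nat <= t i) by (apply (knots_le n t Ht); lia).
  assert (L2 : t (S i) <= t (S n)) by (apply (knots_le n t Ht); lia).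
  exists (2 * c2), (6 * c3).
  apply (cubic_deriv2 (t i) (t (S i)) s s1 s2 c0 c1 c2 c3 Hlt); [| |exact Hq];
    apply (has_deriv_on_sub _ _ _ _ _ _ L1 L2); assumption.
Qed.

(* An antiderivative of g'' (al + be x) is g' (al + be x) - be g. *)
Lemma is_RInt_deriv2_mul_affine c d g g1 g2 al be : c < d ->
  has_deriv_on c d g g1 -> has_deriv_on c d g1 g2 -> cont_on c d g2 ->
  g c = 0 -> g d = 0 ->
  is_RInt (fun x => g2 x * (al + be * x)) c d
    (g1 d * (al + be * d) - g1 c * (al + be * c)).
Proof.
  intros Hcd Hg Hg1 Hg2 Hgc Hgd.
  assert (HP : has_deriv_on c d (fun x => g1 x * (al + be * x) + (- be) * g x)
                 (fun x => g2 x * (al + be * x))).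
  { apply has_deriv_on_ext with (fun x => (g2 x * (al + be * x) + g1 x * be) + (- be) * g1 x);
      [intros; ring|].
    apply has_deriv_on_plus; [exact Hcd| |apply has_deriv_on_scal; assumption].
    apply has_deriv_on_mult; [exact Hcd|exact Hg1|apply has_deriv_on_affine]. }
  replace (g1 d * (al + be * d) - g1 c * (al + be * c)) with
    (g1 d * (al + be * d) + - be * g d - (g1 c * (al + be * c) + - be * g c))
    by (rewrite Hgc, Hgd; ring).
  apply (is_RInt_has_deriv_on c d _ _ Hcd HP).
  apply cont_on_mult; [lra|exact Hg2|].
  apply continuous_cont_on; [lra|]; intros x; apply continuity_pt_filterlim; reg.
Qed.

(* Integrating by parts on each [t_i, t_(i+1)], the boundary terms telescope. *)
Lemma is_RInt_deriv2_mul_pw_affine n t g g2 h : knots_incr n t ->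
  C2_on (t 1%nat) (t (S n)) g g2 ->
  (forall i, (1 <= i <= n + 1)%nat -> g (t i) = 0) ->
  pw_affine n t h -> h (t 1%nat) = 0 -> h (t (S n)) = 0 ->
  is_RInt (fun x => g2 x * h x) (t 1%nat) (t (S n)) 0.
Proof.
  intros Ht [g1 [Hg [Hg1 Hg2]]] Hknots Hh Ha Hb.
  assert (Htel : forall m, (m <= n)%nat ->
    is_RInt (fun x => g2 x * h x) (t 1%nat) (t (S m))
      (g1 (t (S m)) * h (t (S m)) - g1 (t 1%nat) * h (t 1%nat))).
  { induction m as [|m IH]; intros Hm.
    - rewrite Rminus_diag; apply (is_RInt_point (V := R_NormedModule)).
    - set (c := t (S m)); set (d := t (S (S m))).
      assert (Hcd : c < d) by (apply Ht; lia).
      assert (H1c : t 1%nat <= c) by (apply (knots_le n t Ht); lia).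
      assert (Hdb : d <= t (S n)) by (apply (knots_le n t Ht); lia).
      destruct (Hh (S m) ltac:(lia)) as [al [be Haff]]; fold c d in Haff.
      assert (Hpiece : is_RInt (fun x => g2 x * h x) c d (g1 d * h d - g1 c * h c)).
      { rewrite !Haff by lra.
        apply (is_RInt_ext (fun x => g2 x * (al + be * x))).
        { intros x Hx; rewrite Rmin_left, Rmax_right in Hx by lra; rewrite Haff by lra; reflexivity. }
        apply (is_RInt_deriv2_mul_affine c d g g1 g2); try (apply Hknots; lia).
        - exact Hcd.
        - exact (has_deriv_on_sub _ _ _ _ _ _ H1c Hdb Hg).
        - exact (has_deriv_on_sub _ _ _ _ _ _ H1c Hdb Hg1).
        - exact (cont_on_sub _ _ _ _ _ H1c Hdb Hg2). }
      replace (g1 d * h d - g1 (t 1%nat) * h (t 1%nat)) with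
        (plus (g1 c * h c - g1 (t 1%nat) * h (t 1%nat)) (g1 d * h d - g1 c * h c))
        by (unfold plus; simpl; ring).
      exact (is_RInt_Chasles (V := R_NormedModule) _ _ _ _ _ _ (IH ltac:(lia)) Hpiece). }
  specialize (Htel n (le_n n)); rewrite Ha, Hb, !Rmult_0_r, Rminus_diag in Htel; exact Htel.
Qed.

Lemma C2_on_zero a b : C2_on a b (fun _ => 0) (fun _ => 0).
Proof. exists (fun _ => 0); repeat split; [apply has_deriv_on_const..|apply cont_on_const]. Qed.

Lemma C2_on_plus a b F F2 G G2 : a < b -> C2_on a b F F2 -> C2_on a b G G2 ->
  C2_on a b (fun x => F x + G x) (fun x => F2 x + G2 x).
Proof.
  intros Hab [F1 [HF [HF1 HF2]]] [G1 [HG [HG1 HG2]]]; exists (fun x => F1 x + G1 x).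
  repeat split; [apply has_deriv_on_plus..|apply cont_on_plus]; assumption || lra.
Qed.

Lemma C2_on_scal a b k F F2 : a < b -> C2_on a b F F2 ->
  C2_on a b (fun x => k * F x) (fun x => k * F2 x).
Proof.
  intros Hab [F1 [HF [HF1 HF2]]]; exists (fun x => k * F1 x).
  repeat split; [apply has_deriv_on_scal..|apply cont_on_mult]; try assumption.
  - lra.
  - apply cont_on_const.
Qed.

Lemma C2_on_affine a b al be : C2_on a b (fun x => al + be * x) (fun _ => 0).
Proof.
  exists (fun _ => be); repeat split;
    [apply has_deriv_on_affine|apply has_deriv_on_const|apply cont_on_const].
Qed.

Lemma C2_on_unique_deriv2 a b F F2 G2 : a < b -> C2_on a b F F2 -> C2_on a b F G2 ->
  forall x, a <= x <= b -> F2 x = G2 x.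
Proof.
  intros Hab' [F1 [HF [HF1 _]]] [G1 [HG [HG1 _]]].
  apply (has_deriv_on_unique a b F1); [exact Hab'|exact HF1|].
  exact (has_deriv_on_ext_fun a b G1 F1 G2
           (fun x Hx => eq_sym (has_deriv_on_unique a b F F1 G1 Hab' HF HG x Hx)) HG1).
Qed.

Definition lincomb (f : nat -> R -> R) (w : nat -> R) (m M : nat) (x : R) : R :=
  sum_n_m (fun k => w k * f k x) m M.

Lemma sum_n_m_ends (u : nat -> R) m M : (m < M)%nat ->
  sum_n_m u m M = u m + sum_n_m u (S m) (pred M) + u M.
Proof.
  intros HmM; destruct M as [|M]; [lia|]; simpl pred.
  rewrite sum_n_Sm, sum_Sn_m by lia; reflexivity.
Qed.

Lemma qform_border (c : nat -> nat -> R) (lo hi : nat) (v : nat -> R) : (lo < hi)%nat ->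
  (forall k l, c k l = c l k) ->
  (forall j, (lo < j < hi)%nat -> c lo j = 0 /\ c hi j = 0) ->
  qform c lo hi v =
    v lo * c lo lo * v lo + v lo * c lo hi * v hi + v hi * c hi lo * v lo
    + v hi * c hi hi * v hi + qform c (S lo) (pred hi) v.
Proof.
  intros Hlh Hsym Hborder; unfold qform.
  assert (Hrow : forall k, k = lo \/ k = hi ->
    sum_n_m (fun l => v k * c k l * v l) (S lo) (pred hi) = 0).
  { intros k Hk; apply sum_n_m_eq0; intros j Hj.
    destruct (Hborder j ltac:(lia)) as [Hlo Hhi].
    destruct Hk as [-> | ->]; [rewrite Hlo|rewrite Hhi]; ring. }
  assert (Hmid : forall k, (S lo <= k <= pred hi)%nat ->
    @eq R (sum_n_m (fun l => v k * c k l * v l) lo hi)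
          (sum_n_m (fun l => v k * c k l * v l) (S lo) (pred hi))).
  { intros k Hk; rewrite sum_n_m_ends by exact Hlh; cbv beta.
    rewrite (Hsym k lo), (Hsym k hi); destruct (Hborder k ltac:(lia)) as [Hlo Hhi].
    rewrite Hlo, Hhi; ring. }
  rewrite sum_n_m_ends by exact Hlh; rewrite (sum_n_m_ext_loc _ _ _ _ Hmid).
  rewrite !(sum_n_m_ends _ lo hi) by exact Hlh; rewrite !Hrow by auto; ring.
Qed.

(** * The natural basis and the matrix C *)

Lemma Cmat_sym n t phi2 k l : Cmat n t phi2 k l = Cmat n t phi2 l k.
Proof. unfold Cmat; f_equal; apply functional_extensionality; intros; ring. Qed.

Lemma Cmat_S n t phi2 k l :
  Cmat n t phi2 (S k) (S l) = RInt (fun x => phi2 k x * phi2 l x) (t 1%nat) (t (S n)).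
Proof. unfold Cmat; simpl; rewrite !Nat.sub_0_r; reflexivity. Qed.

Lemma qform_Cmat n t phi2 v : qform (Cmat n t phi2) 1 (n + 3) v =
  sum_n_m (fun k => sum_n_m (fun l =>
    v (S k) * Cmat n t phi2 (S k) (S l) * v (S l)) 0 (n + 2)) 0 (n + 2).
Proof.
  unfold qform; replace (n + 3)%nat with (S (n + 2)) by lia.
  rewrite <- sum_n_m_S; apply sum_n_m_ext_loc; intros k _; rewrite <- sum_n_m_S; reflexivity.
Qed.

Lemma ext_vec_first n u1 p un1 : ext_vec n u1 p un1 1 = u1.
Proof. reflexivity. Qed.

Lemma ext_vec_last n u1 p un1 : ext_vec n u1 p un1 (n + 3) = un1.
Proof.
  unfold ext_vec; replace (Nat.eqb (n + 3) 1) with false by (symmetry; apply Nat.eqb_neq; lia).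
  rewrite Nat.eqb_refl; reflexivity.
Qed.

Lemma ext_vec_inner n u1 p un1 k : (2 <= k <= n + 2)%nat -> ext_vec n u1 p un1 k = p (k - 1)%nat.
Proof.
  intros Hk; unfold ext_vec.
  replace (Nat.eqb k 1) with false by (symmetry; apply Nat.eqb_neq; lia).
  replace (Nat.eqb k (n + 3)) with false by (symmetry; apply Nat.eqb_neq; lia); reflexivity.
Qed.

Lemma in_range_L_ext n t p q : (forall i, (1 <= i <= n + 1)%nat -> p i = q i) ->
  in_range_L n t p -> in_range_L n t q.
Proof. intros Hpq [al [be Hp]]; exists al, be; intros i Hi; rewrite <- Hpq by exact Hi; auto. Qed.

Section NaturalBasis.

Variables (n : nat) (t : nat -> R) (phi phi2 : nat -> R -> R).
Hypotheses (Hn : (1 <= n)%nat) (Ht : knots_incr n t) (Hb : natural_basis n t phi phi2).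

Let Hab : t 1%nat < t (S n) := knots_first_lt_last n t Hn Ht.

Lemma basis_C2 k : (k <= n + 2)%nat -> C2_on (t 1%nat) (t (S n)) (phi k) (phi2 k).
Proof. intros Hk; exact (proj2 (proj1 Hb k Hk)). Qed.

Lemma basis_deriv2_pw_affine k : (k <= n + 2)%nat -> pw_affine n t (phi2 k).
Proof. intros Hk; exact (pw_affine_deriv2 n t _ _ Ht (proj1 Hb k Hk)). Qed.

Lemma lincomb_C2 w m M : (M <= n + 2)%nat ->
  C2_on (t 1%nat) (t (S n)) (lincomb phi w m M) (lincomb phi2 w m M).
Proof.
  intros HM.
  apply (sum_n_m_fun_closed2 (C2_on (t 1%nat) (t (S n))) (C2_on_zero _ _)
           (fun f1 f2 g1 g2 => C2_on_plus _ _ f1 f2 g1 g2 Hab)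
           (fun k x => w k * phi k x) (fun k x => w k * phi2 k x)).
  intros k Hk; apply C2_on_scal; [exact Hab|apply basis_C2; lia].
Qed.

Lemma lincomb_deriv2_pw_affine w m M : (M <= n + 2)%nat -> pw_affine n t (lincomb phi2 w m M).
Proof.
  intros HM.
  apply (sum_n_m_fun_closed (pw_affine n t) (pw_affine_zero n t) (pw_affine_plus n t)
           (fun k x => w k * phi2 k x)).
  intros k Hk; apply pw_affine_scal, basis_deriv2_pw_affine; lia.
Qed.

Lemma lincomb_knot w m M i : (m <= 1)%nat -> (n + 1 <= M <= n + 2)%nat -> (1 <= i <= n + 1)%nat ->
  lincomb phi w m M (t i) = w i.
Proof.
  destruct Hb as [_ [H0 [_ [_ [Hj [HN _]]]]]]; intros Hm HM Hi; unfold lincomb.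
  rewrite (sum_n_m_delta _ m M i); [|lia|].
  - destruct (Hj i Hi) as [Hv _]; rewrite Hv, Nat.eqb_refl by exact Hi; ring.
  - intros k Hk Hki.
    destruct (Nat.eq_dec k 0) as [->|]; [rewrite H0 by exact Hi; ring|].
    destruct (Nat.eq_dec k (n + 2)) as [->|]; [rewrite HN by exact Hi; ring|].
    destruct (Hj k ltac:(lia)) as [Hv _]; rewrite Hv by exact Hi.
    replace (Nat.eqb i k) with false by (symmetry; apply Nat.eqb_neq; lia); ring.
Qed.

Lemma lincomb_deriv2_first w : lincomb phi2 w 0 (n + 2) (t 1%nat) = w 0%nat.
Proof.
  destruct Hb as [_ [_ [H0 [_ [Hj [_ [HN _]]]]]]]; unfold lincomb.
  rewrite (sum_n_m_delta _ 0 (n + 2) 0); [rewrite H0; ring|lia|].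
  intros k Hk Hk0; destruct (Nat.eq_dec k (n + 2)) as [->|]; [rewrite HN; ring|].
  destruct (Hj k ltac:(lia)) as [_ [Hv _]]; rewrite Hv; ring.
Qed.

Lemma lincomb_deriv2_last w : lincomb phi2 w 0 (n + 2) (t (S n)) = w (n + 2)%nat.
Proof.
  destruct Hb as [_ [_ [_ [H0 [Hj [_ [_ HN]]]]]]]; unfold lincomb.
  rewrite (sum_n_m_delta _ 0 (n + 2) (n + 2)); [rewrite HN; ring|lia|].
  intros k Hk HkN; destruct (Nat.eq_dec k 0) as [->|]; [rewrite H0; ring|].
  destruct (Hj k ltac:(lia)) as [_ [_ Hv]]; rewrite Hv; ring.
Qed.

Lemma is_RInt_Cmat k l : (k <= n + 2)%nat -> (l <= n + 2)%nat ->
  is_RInt (fun x => phi2 k x * phi2 l x) (t 1%nat) (t (S n)) (Cmat n t phi2 (S k) (S l)).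
Proof.
  intros Hk Hl; rewrite Cmat_S; apply (RInt_correct (V := R_CompleteNormedModule)).
  destruct (basis_C2 k Hk) as [_ [_ [_ Hk2]]], (basis_C2 l Hl) as [_ [_ [_ Hl2]]].
  apply ex_RInt_cont_on; [lra|apply cont_on_mult; assumption || lra].
Qed.

Lemma is_RInt_lincomb_sqr w m M : (M <= n + 2)%nat ->
  is_RInt (fun x => lincomb phi2 w m M x * lincomb phi2 w m M x) (t 1%nat) (t (S n))
    (sum_n_m (fun k => sum_n_m (fun l => w k * Cmat n t phi2 (S k) (S l) * w l) m M) m M).
Proof.
  intros HM; apply is_RInt_sum_n_m_mult; intros k l Hk Hl; apply is_RInt_Cmat; lia.
Qed.

Lemma is_RInt_qform_Cmat v :
  is_RInt (fun x => lincomb phi2 (fun k => v (S k)) 0 (n + 2) x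
                    * lincomb phi2 (fun k => v (S k)) 0 (n + 2) x)
    (t 1%nat) (t (S n)) (qform (Cmat n t phi2) 1 (n + 3) v).
Proof. rewrite qform_Cmat; apply is_RInt_lincomb_sqr, le_n. Qed.

Lemma lincomb_deriv2_eq0_in_range w m M : (m <= 1)%nat -> (n + 1 <= M <= n + 2)%nat ->
  (forall x, t 1%nat <= x <= t (S n) -> lincomb phi2 w m M x = 0) -> in_range_L n t w.
Proof.
  intros Hm HM Hz; destruct (lincomb_C2 w m M ltac:(lia)) as [s1 [Hs [Hs1 _]]].
  destruct (affine_of_deriv2_eq0 _ _ _ _ _ Hab Hs Hs1 Hz) as [al [be Haff]].
  exists al, be; intros i Hi; rewrite <- (lincomb_knot w m M i) by assumption.
  apply Haff; split; apply (knots_le n t Ht); lia.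
Qed.

Lemma is_RInt_lincomb_mul_pw_affine w m M h : (m <= 1)%nat -> (n + 1 <= M <= n + 2)%nat ->
  in_range_L n t w -> pw_affine n t h -> h (t 1%nat) = 0 -> h (t (S n)) = 0 ->
  is_RInt (fun x => lincomb phi2 w m M x * h x) (t 1%nat) (t (S n)) 0.
Proof.
  intros Hm HM [al [be Hw]] Hh Ha Hb'.
  (* subtracting the affine interpolant of the knot values leaves a spline vanishing at the knots *)
  pose proof (C2_on_plus _ _ _ _ _ _ Hab (lincomb_C2 w m M ltac:(lia))
    (C2_on_scal _ _ (-1) _ _ Hab (C2_on_affine (t 1%nat) (t (S n)) al be))) as HC2.
  eapply is_RInt_ext; [|apply (is_RInt_deriv2_mul_pw_affine n t _ _ h Ht HC2); try assumption].
  - intros; simpl; ring.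
  - intros i Hi; rewrite lincomb_knot, Hw by assumption; ring.
Qed.

Lemma is_RInt_end_deriv2_mul_pw_affine k h : (k = 0 \/ k = n + 2)%nat ->
  pw_affine n t h -> h (t 1%nat) = 0 -> h (t (S n)) = 0 ->
  is_RInt (fun x => phi2 k x * h x) (t 1%nat) (t (S n)) 0.
Proof.
  intros Hk Hh Ha Hb'; apply (is_RInt_deriv2_mul_pw_affine n t (phi k)); try assumption.
  - apply basis_C2; lia.
  - destruct Hb as [_ [H0 [_ [_ [_ [HN _]]]]]]; intros i Hi.
    destruct Hk as [-> | ->]; auto.
Qed.


Lemma Cmat_qform_ge0 v : 0 <= qform (Cmat n t phi2) 1 (n + 3) v.
Proof. exact (is_RInt_sqr_ge0 _ _ _ _ (Rlt_le _ _ Hab) (is_RInt_qform_Cmat v)). Qed.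

Lemma Cmat_qform_eq0_iff u1 un1 p :
  qform (Cmat n t phi2) 1 (n + 3) (ext_vec n u1 p un1) = 0 <->
  u1 = 0 /\ un1 = 0 /\ in_range_L n t p.
Proof.
  set (w := fun k => ext_vec n u1 p un1 (S k)).
  assert (Hw : forall i, (1 <= i <= n + 1)%nat -> w i = p i).
  { intros i Hi; unfold w; rewrite ext_vec_inner by lia; f_equal; lia. }
  assert (HwN : w (n + 2)%nat = un1).
  { unfold w; replace (S (n + 2)) with (n + 3)%nat by lia; apply ext_vec_last. }
  pose proof (is_RInt_qform_Cmat (ext_vec n u1 p un1)) as HI; fold w in HI.
  split.
  - intros Hq; rewrite Hq in HI.
    destruct (lincomb_C2 w 0 (n + 2) (le_n _)) as [_ [_ [_ Hc]]].
    pose proof (is_RInt_sqr_eq0 _ _ _ Hab Hc HI) as Hz.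
    split; [|split].
    + change u1 with (w 0%nat); rewrite <- lincomb_deriv2_first; apply Hz; lra.
    + rewrite <- HwN, <- lincomb_deriv2_last; apply Hz; lra.
    + apply (in_range_L_ext n t w); [exact Hw|].
      apply (lincomb_deriv2_eq0_in_range w 0 (n + 2)); [lia|lia|exact Hz].
  - intros [Hu1 [Hun1 Hp]].
    apply (is_RInt_unique_R _ _ _ _ _ HI).
    apply (is_RInt_lincomb_mul_pw_affine w 0 (n + 2)); [lia|lia| | | |].
    + apply (in_range_L_ext n t p); [intros; symmetry; auto|exact Hp].
    + apply lincomb_deriv2_pw_affine; lia.
    + rewrite lincomb_deriv2_first; exact Hu1.
    + rewrite lincomb_deriv2_last; congruence.
Qed.

Lemma Cmat_border_inner_eq0 j : (1 <= j <= n + 1)%nat ->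
  Cmat n t phi2 1 (S j) = 0 /\ Cmat n t phi2 (n + 3) (S j) = 0.
Proof.
  intros Hj; pose proof Hb as [_ [_ [_ [_ [Hinner _]]]]].
  destruct (Hinner j Hj) as [_ [Hja Hjb]].
  replace (n + 3)%nat with (S (n + 2)) by lia.
  split; [apply (is_RInt_unique_R _ _ _ _ _ (is_RInt_Cmat 0 j ltac:(lia) ltac:(lia)))
         |apply (is_RInt_unique_R _ _ _ _ _ (is_RInt_Cmat (n + 2) j ltac:(lia) ltac:(lia)))];
    apply is_RInt_end_deriv2_mul_pw_affine; auto; apply basis_deriv2_pw_affine; lia.
Qed.

Lemma qform_Cmat_border v : qform (Cmat n t phi2) 1 (n + 3) v =
  v 1%nat * Cmat n t phi2 1 1 * v 1%nat + v 1%nat * Cmat n t phi2 1 (n + 3) * v (n + 3)%nat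
  + v (n + 3)%nat * Cmat n t phi2 (n + 3) 1 * v 1%nat
  + v (n + 3)%nat * Cmat n t phi2 (n + 3) (n + 3) * v (n + 3)%nat
  + qform (Cmat n t phi2) 2 (n + 2) v.
Proof.
  replace 2%nat with (S 1) by reflexivity; replace (n + 2)%nat with (pred (n + 3)) by lia.
  apply qform_border; [lia|apply Cmat_sym|].
  intros j Hj; replace j with (S (j - 1)) by lia; apply Cmat_border_inner_eq0; lia.
Qed.

Lemma Cmat_corner_pos x y : x <> 0 \/ y <> 0 ->
  0 < x * Cmat n t phi2 1 1 * x + x * Cmat n t phi2 1 (n + 3) * y
      + y * Cmat n t phi2 (n + 3) 1 * x + y * Cmat n t phi2 (n + 3) (n + 3) * y.
Proof.
  intros Hxy; set (v := ext_vec n x (fun _ => 0) y).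
  assert (Hinner : qform (Cmat n t phi2) 2 (n + 2) v = 0).
  { apply sum_n_m_eq0; intros k Hk; apply sum_n_m_eq0; intros l Hl.
    unfold v; rewrite (ext_vec_inner n x _ y k) by lia; ring. }
  pose proof (qform_Cmat_border v) as Hq.
  rewrite Hinner, Rplus_0_r in Hq; unfold v in Hq; rewrite ext_vec_first, ext_vec_last in Hq.
  rewrite <- Hq; destruct (Rle_lt_or_eq_dec _ _ (Cmat_qform_ge0 v)) as [|Heq]; [assumption|].
  symmetry in Heq; apply Cmat_qform_eq0_iff in Heq; tauto.
Qed.

Lemma is_RInt_Cmat_row p k : (k <= n + 2)%nat ->
  is_RInt (fun x => lincomb phi2 p 1 (n + 1) x * phi2 k x) (t 1%nat) (t (S n))
    (sum_n_m (fun j => Cmat n t phi2 (S k) j * p (j - 1)%nat) 2 (n + 2)).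
Proof.
  intros Hk; replace 2%nat with (S 1) by reflexivity.
  replace (n + 2)%nat with (S (n + 1)) by lia; rewrite <- sum_n_m_S.
  apply (is_RInt_ext (fun x => sum_n_m (fun j => p j * (phi2 k x * phi2 j x)) 1 (n + 1))).
  { intros x _; unfold lincomb; rewrite sum_n_m_Rmult_r; apply sum_n_m_ext_loc.
    intros; simpl; ring. }
  apply is_RInt_sum_n_m; intros j Hj; simpl; rewrite Nat.sub_0_r, Rmult_comm.
  apply is_RInt_scal_R, is_RInt_Cmat; lia.
Qed.

Lemma Cmat_inner_kernel p :
  (forall i, (2 <= i <= n + 2)%nat ->
     sum_n_m (fun j => Cmat n t phi2 i j * p (j - 1)%nat) 2 (n + 2) = 0) <->
  in_range_L n t p.
Proof.
  split.
  - intros Hrows; apply (Cmat_qform_eq0_iff 0 0 p).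
    rewrite qform_Cmat_border, ext_vec_first, ext_vec_last.
    replace (qform (Cmat n t phi2) 2 (n + 2) (ext_vec n 0 p 0)) with 0; [ring|].
    symmetry; apply sum_n_m_eq0; intros i Hi.
    rewrite ext_vec_inner, <- (Rmult_0_r (p (i - 1)%nat)), <- (Hrows i Hi), sum_n_m_Rmult_l
      by exact Hi.
    apply sum_n_m_ext_loc; intros j Hj; rewrite ext_vec_inner by lia; simpl; ring.
  - intros Hp i Hi; replace i with (S (i - 1)) by lia.
    apply (is_RInt_unique_R _ _ _ _ _ (is_RInt_Cmat_row p (i - 1) ltac:(lia))).
    pose proof Hb as [_ [_ [_ [_ [Hinner _]]]]].
    destruct (Hinner (i - 1)%nat ltac:(lia)) as [_ [Hia Hib]].
    apply (is_RInt_lincomb_mul_pw_affine p 1 (n + 1)); auto; try lia.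
    apply basis_deriv2_pw_affine; lia.
Qed.

Lemma RInt_sqr_deriv2 u1 un1 p s2 :
  C2_on (t 1%nat) (t (S n))
    (fun x => u1 * phi 0%nat x + sum_n_m (fun j => p j * phi j x) 1 (n + 1)
              + un1 * phi (n + 2)%nat x) s2 ->
  RInt (fun x => Rabs (s2 x) ^ 2) (t 1%nat) (t (S n)) =
    qform (Cmat n t phi2) 1 (n + 3) (ext_vec n u1 p un1).
Proof.
  intros Hs; set (w := fun k => ext_vec n u1 p un1 (S k)).
  assert (Hsplit : forall f x, lincomb f w 0 (n + 2) x =
            u1 * f 0%nat x + sum_n_m (fun j => p j * f j x) 1 (n + 1) + un1 * f (n + 2)%nat x).
  { intros f x; unfold lincomb; rewrite sum_n_m_ends by lia.
    replace (pred (n + 2)) with (n + 1)%nat by lia.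
    replace (w (n + 2)%nat) with un1
      by (unfold w; replace (S (n + 2)) with (n + 3)%nat by lia; symmetry; apply ext_vec_last).
    f_equal; f_equal; apply sum_n_m_ext_loc; intros j Hj; unfold w.
    rewrite ext_vec_inner by lia; simpl; rewrite Nat.sub_0_r; reflexivity. }
  pose proof (lincomb_C2 w 0 (n + 2) (le_n _)) as Hw.
  replace (lincomb phi w 0 (n + 2)) with
    (fun x => u1 * phi 0%nat x + sum_n_m (fun j => p j * phi j x) 1 (n + 1)
              + un1 * phi (n + 2)%nat x) in Hw
    by (apply functional_extensionality; intros; symmetry; apply Hsplit).
  pose proof (C2_on_unique_deriv2 _ _ _ _ _ Hab Hs Hw) as Hs2.
  apply (is_RInt_unique (V := R_CompleteNormedModule)).
  apply (is_RInt_ext (fun x => lincomb phi2 w 0 (n + 2) x * lincomb phi2 w 0 (n + 2) x)).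
  - intros x Hx; rewrite Rmin_left, Rmax_right in Hx by lra.
    rewrite pow2_abs, Hs2 by lra; simpl; ring.
  - apply is_RInt_qform_Cmat.
Qed.

Lemma RInt_sqr_deriv2_blocks u1 un1 p s2 :
  C2_on (t 1%nat) (t (S n))
    (fun x => u1 * phi 0%nat x + sum_n_m (fun j => p j * phi j x) 1 (n + 1)
              + un1 * phi (n + 2)%nat x) s2 ->
  RInt (fun x => Rabs (s2 x) ^ 2) (t 1%nat) (t (S n)) =
    u1 ^ 2 * Cmat n t phi2 1 1 + un1 ^ 2 * Cmat n t phi2 (n + 3) (n + 3)
    + 2 * Cmat n t phi2 1 (n + 3) * u1 * un1
    + sum_n_m (fun i => sum_n_m (fun j =>
        p (i - 1)%nat * Cmat n t phi2 i j * p (j - 1)%nat) 2 (n + 2)) 2 (n + 2).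
Proof.
  intros Hs; rewrite (RInt_sqr_deriv2 u1 un1 p s2 Hs), qform_Cmat_border.
  rewrite ext_vec_first, ext_vec_last, (Cmat_sym n t phi2 (n + 3) 1).
  replace (qform (Cmat n t phi2) 2 (n + 2) (ext_vec n u1 p un1)) with
    (sum_n_m (fun i => sum_n_m (fun j =>
        p (i - 1)%nat * Cmat n t phi2 i j * p (j - 1)%nat) 2 (n + 2)) 2 (n + 2));
    [match goal with |- ?l = ?r => change (@eq R l r) end; ring|].
  apply sum_n_m_ext_loc; intros i Hi; apply sum_n_m_ext_loc; intros j Hj.
  rewrite !ext_vec_inner by assumption; reflexivity.
Qed.

End NaturalBasis.

Theorem proposition2 (n : nat) (t : nat -> R) (phi phi2 : nat -> R -> R) :
  (1 <= n)%nat ->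
  knots_incr n t ->
  natural_basis n t phi phi2 ->
  let c := Cmat n t phi2 in
  (* (i) symmetric and non-negative definite *)
  ((forall k l, (1 <= k <= n + 3)%nat -> (1 <= l <= n + 3)%nat -> c k l = c l k) /\
   (forall v : nat -> R, 0 <= qform c 1 (n + 3) v)) /\
  (* (ii) *)
  (forall (u1 un1 : R) (p : nat -> R),
     qform c 1 (n + 3) (ext_vec n u1 p un1) = 0 <->
     (u1 = 0 /\ un1 = 0 /\ in_range_L n t p)) /\
  (* (iii) *)
  (forall j, (1 <= j <= n + 1)%nat -> c 1%nat (j + 1)%nat = 0 /\ c (n + 3)%nat (j + 1)%nat = 0) /\
  (* (iv) the corner 2x2 matrix is symmetric positive definite *)
  (c 1%nat (n + 3)%nat = c (n + 3)%nat 1%nat /\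
   forall x y : R, (x <> 0 \/ y <> 0) ->
     0 < x * c 1%nat 1%nat * x + x * c 1%nat (n + 3)%nat * y
         + y * c (n + 3)%nat 1%nat * x + y * c (n + 3)%nat (n + 3)%nat * y) /\
  (* (v) null space of C(2,n+2) equals R(L) *)
  (forall p : nat -> R,
     (forall i, (2 <= i <= n + 2)%nat ->
        sum_n_m (fun j => c i j * p (j - 1)%nat) 2 (n + 2) = 0) <->
     in_range_L n t p) /\
  (* (vi) *)
  (forall (u1 un1 : R) (p : nat -> R) (s2 : R -> R),
     C2_on (t 1%nat) (t (S n))
       (fun x => u1 * phi 0%nat x + sum_n_m (fun j => p j * phi j x) 1 (n + 1)
                 + un1 * phi (n + 2)%nat x) s2 ->
     RInt (fun x => (Rabs (s2 x)) ^ 2) (t 1%nat) (t (S n)) =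
       u1 ^ 2 * c 1%nat 1%nat + un1 ^ 2 * c (n + 3)%nat (n + 3)%nat
       + 2 * c 1%nat (n + 3)%nat * u1 * un1
       + sum_n_m (fun i => sum_n_m (fun j => p (i - 1)%nat * c i j * p (j - 1)%nat) 2 (n + 2)) 2 (n + 2)).

Proof.
  intros Hn Ht Hb c; unfold c; clear c.
  split; [split|split; [|split; [|split; [|split]]]].
  - intros k l _ _; apply Cmat_sym.
  - exact (Cmat_qform_ge0 n t phi phi2 Hn Ht Hb).
  - exact (Cmat_qform_eq0_iff n t phi phi2 Hn Ht Hb).
  - intros j Hj; rewrite Nat.add_1_r; exact (Cmat_border_inner_eq0 n t phi phi2 Hn Ht Hb j Hj).
  - split; [apply Cmat_sym|exact (Cmat_corner_pos n t phi phi2 Hn Ht Hb)].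
  - exact (Cmat_inner_kernel n t phi phi2 Hn Ht Hb).
  - exact (RInt_sqr_deriv2_blocks n t phi phi2 Hn Ht Hb).
Qed.
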